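(* A balanced wiring $F$ is nilpotent if and only if its computation graph $\mathbf G(F)$ is acyclic.
   Context: Terms: first-order terms built from an infinite set of variables, a binary function symbol $\bullet$ written infix, infinitely many constant symbols including a distinguished constant $\star$, and for each $n\ge1$ at least one $n$-ary function symbol. $\mathrm{var}(t)$ is the set of variables of $t$; $t$ is closed if $\mathrm{var}(t)=\emptyset$. The height $h(t)$ is the maximal distance from the root to a node in the tree of $t$; the height of an occurrence of a variable in $t$ is its distance from the root. A flow is a pair of terms written $t\leftarrow u$ with $\mathrm{var}(t)\subseteq\mathrm{var}(u)$, considered up to renaming. A fact is a flow $t\leftarrow\star$ (so $t$ is closed). The product of flows $u\leftarrow v$ and $t\leftarrow w$ (representatives chosen with disjoint variable sets) is defined iff $v$ and $t$ are unifiable, and then equals $u\theta\leftarrow w\theta$ with $\theta$ a most general unifier of $v,t$. A wiring is a finite set of flows, written as a formal sum, with $0$ the empty wiring; product $FG=\{fg: f\in F,g\in G, fg\text{ defined}\}$, $F^n$ the $n$-fold product. For a fact $\mathbf u$, $F\mathbf u$ denotes $F\{\mathbf u\}$ (a set of facts). $F$ is nilpotent if $F^n=0$ for some $n\in\mathbb N$. A flow $t\leftarrow u$ is balanced if for every variable $x$, all occurrences of $x$ in $t$ and in $u$ have the same height; a wiring is balanced if all its flows are. The height of a flow $t\leftarrow u$ is $\max\{h(t),h(u)\}$; the height $h(F)$ of a wiring is the maximal height of its flows. For a balanced wiring $F$, its computation space $\mathrm{Comp}(F)$ is the set of facts $t\leftarrow\star$ with $h(t)\le h(F)$ and $t$ built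 using only symbols occurring in $F$ and the constant $\star$. The computation graph $\mathbf G(F)$ is the directed graph with vertex set $\mathrm{Comp}(F)$ and an edge from $\mathbf u$ to $\mathbf v$ iff $\mathbf v\in F\mathbf u$. *)

From Stdlib Require Import List Arith Relations.
Import ListNotations.

Record signature := Sig {
  sym : Type;
  arity : sym -> nat;
  star : sym;
  bullet : sym;
  arity_star : arity star = 0;
  arity_bullet : arity bullet = 2;
  const : nat -> sym;
  const_inj : forall m n, const m = const n -> m = n;
  arity_const : forall n, arity (const n) = 0;
  fun_exists : forall n, 1 <= n -> exists f, arity f = n
}.

Section Terms.
Variable Sg : signature.

Inductive term : Type :=
| Var (x : nat)
| App (f : sym Sg) (ts : list term).

Fixpoint wf (t : term) : Prop :=
  match t with
  | Var _ => True
  | App f ts => length ts = arity Sg f /\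
      (fix wfl (l : list term) : Prop :=
         match l with [] => True | u :: l' => wf u /\ wfl l' end) ts
  end.

Fixpoint occurs (x : nat) (t : term) : Prop :=
  match t with
  | Var y => x = y
  | App _ ts =>
      (fix ol (l : list term) : Prop :=
         match l with [] => False | u :: l' => occurs x u \/ ol l' end) ts
  end.

Definition closed (t : term) : Prop := forall x, ~ occurs x t.

Fixpoint sym_occurs (f : sym Sg) (t : term) : Prop :=
  match t with
  | Var _ => False
  | App g ts => f = g \/
      (fix ol (l : list term) : Prop :=
         match l with [] => False | u :: l' => sym_occurs f u \/ ol l' end) ts
  end.

Fixpoint height (t : term) : nat :=
  match t with
  | Var _ => 0
  | App _ ts =>
      (fix hl (l : list term) : nat :=
         match l with [] => 0 | u :: l' => Nat.max (S (height u)) (hl l') end) ts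
  end.

Fixpoint occ_heights (x : nat) (t : term) : list nat :=
  match t with
  | Var y => if Nat.eqb x y then [0] else []
  | App _ ts =>
      map S ((fix ol (l : list term) : list nat :=
         match l with [] => [] | u :: l' => occ_heights x u ++ ol l' end) ts)
  end.

Fixpoint subst (th : nat -> term) (t : term) : term :=
  match t with
  | Var x => th x
  | App f ts => App f (map (subst th) ts)
  end.

Definition rename (s : nat -> nat) (t : term) : term :=
  subst (fun x => Var (s x)) t.

Definition is_mgu (th : nat -> term) (a b : term) : Prop :=
  subst th a = subst th b /\
  forall sg : nat -> term, subst sg a = subst sg b ->
    exists rho : nat -> term, forall x, sg x = subst rho (th x).

(* a flow t <- u is represented by the pair (t, u) *)
Definition flow : Type := (term * term)%type.

Definition is_flow (f : flow) : Prop :=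
  wf (fst f) /\ wf (snd f) /\ (forall x, occurs x (fst f) -> occurs x (snd f)).

Definition flow_equiv (f g : flow) : Prop :=
  exists s : nat -> nat, (forall x y, s x = s y -> x = y) /\
    rename s (fst f) = fst g /\ rename s (snd f) = snd g.

Definition flow_occurs (x : nat) (f : flow) : Prop :=
  occurs x (fst f) \/ occurs x (snd f).

(* [prod f g r]: the product f g of flows f = (u <- v), g = (t <- w) is
   defined and r is a representative of it: rename g apart from f into
   (t' <- w'), take a most general unifier theta of v and t', and r is
   (u theta <- w' theta) up to renaming. *)
Definition prod (f g r : flow) : Prop :=
  exists (s : nat -> nat) (th : nat -> term),
    (forall x y, s x = s y -> x = y) /\
    (forall x, flow_occurs x f -> forall y, flow_occurs y g -> s y <> x) /\
    is_mgu th (snd f) (rename s (fst g)) /\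
    flow_equiv (subst th (fst f), subst th (rename s (snd g))) r.

(* a wiring: a finite set of flows, given by a list of representatives *)
Definition wiring : Type := list flow.

Definition is_wiring (F : wiring) : Prop := forall f, In f F -> is_flow f.

(* [pow F n g]: g is (a representative of) an element of F^(n+1),
   where F^(k+1) = F F^k *)
Fixpoint pow (F : wiring) (n : nat) (g : flow) : Prop :=
  match n with
  | 0 => exists f, In f F /\ flow_equiv f g
  | S m => exists f h, In f F /\ pow F m h /\ prod f h g
  end.

(* F nilpotent: F^n = 0 for some n (F^0 is the identity, never 0, so we
   quantify over n+1) *)
Definition nilpotent (F : wiring) : Prop :=
  exists n, forall g, ~ pow F n g.

Definition balanced_flow (f : flow) : Prop :=
  forall x h1 h2,
    In h1 (occ_heights x (fst f) ++ occ_heights x (snd f)) ->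
    In h2 (occ_heights x (fst f) ++ occ_heights x (snd f)) -> h1 = h2.

Definition balanced (F : wiring) : Prop := forall f, In f F -> balanced_flow f.

Definition flow_height (f : flow) : nat := Nat.max (height (fst f)) (height (snd f)).

Definition wiring_height (F : wiring) : nat :=
  fold_right (fun f m => Nat.max (flow_height f) m) 0 F.

Definition starT : term := App (star Sg) [].

Definition fact (t : term) : flow := (t, starT).

(* the fact t <- star belongs to Comp(F) *)
Definition in_comp (F : wiring) (t : term) : Prop :=
  wf t /\ closed t /\ height t <= wiring_height F /\
  (forall g, sym_occurs g t ->
     g = star Sg \/ exists f, In f F /\ (sym_occurs g (fst f) \/ sym_occurs g (snd f))).

Definition comp_edge (F : wiring) (t t' : term) : Prop :=
  in_comp F t /\ in_comp F t' /\
  exists f, In f F /\ prod f (fact t) (fact t').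

Definition acyclic (F : wiring) : Prop :=
  ~ exists t, clos_trans term (comp_edge F) t t.

End Terms.

Arguments Var {Sg}.
Arguments App {Sg}.

From Pilot Require Import Defs.
From Stdlib Require Import List Arith Relations Lia ListDec Classical ClassicalEpsilon.
Import ListNotations.

(* If G(F) has a cycle, every edge of it is a closed instance of a flow of F and consecutive
   instances match, so by Robinson's unification theorem the product of the flows met along
   the cycle is defined; going round the cycle n times yields an element of F^n, hence F is
   not nilpotent.
   Conversely, an element of F^(n+1) instantiates to a chain of n+1 steps, each an instance of
   a flow of F.  Truncating all terms at height h(F) and replacing foreign symbols by star
   lands in Comp(F); since F is balanced, every variable of a flow sits at a single height, so
   truncation commutes with instantiation and the chain becomes a walk in G(F).  Comp(F) is
   finite, so a long enough walk repeats a vertex: G(F) has a cycle. *)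

Section Terms.
Variable Sg : signature.
Local Notation tm := (term Sg).
Local Notation sb := (subst Sg).

Lemma term_ind_nested (P : tm -> Prop) :
  (forall x, P (Var x)) -> (forall f ts, Forall P ts -> P (App f ts)) -> forall t, P t.
Proof.
  intros HV HA. fix IH 1. intros [x|f ts].
  - apply HV.
  - apply HA. induction ts as [|u l IHl]; constructor; [apply IH | exact IHl].
Qed.

Lemma wf_App f ts : wf Sg (App f ts) <-> length ts = arity Sg f /\ Forall (wf Sg) ts.
Proof.
  simpl. apply and_iff_compat_l. induction ts as [|u ts IH]; simpl.
  - split; auto.
  - rewrite Forall_cons_iff, IH. reflexivity.
Qed.

Lemma occurs_App x f ts : occurs Sg x (App f ts) <-> Exists (occurs Sg x) ts.
Proof.
  simpl. induction ts as [|u ts IH]; simpl.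
  - split; [tauto | intro H; inversion H].
  - rewrite Exists_cons, IH. reflexivity.
Qed.

Lemma sym_occurs_App g f ts :
  sym_occurs Sg g (App f ts) <-> g = f \/ Exists (sym_occurs Sg g) ts.
Proof.
  simpl. apply or_iff_compat_l. induction ts as [|u ts IH]; simpl.
  - split; [tauto | intro H; inversion H].
  - rewrite Exists_cons, IH. reflexivity.
Qed.

Lemma height_App_le f ts d :
  height Sg (App f ts) <= d <-> Forall (fun u => S (height Sg u) <= d) ts.
Proof.
  induction ts as [|u ts IH].
  - split; [constructor | simpl; lia].
  - change (Nat.max (S (height Sg u)) (height Sg (App f ts)) <= d
            <-> Forall (fun u => S (height Sg u) <= d) (u :: ts)).
    rewrite Nat.max_lub_iff, IH, Forall_cons_iff. reflexivity.
Qed.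

Lemma occ_heights_App x f ts :
  occ_heights Sg x (App f ts) = map S (flat_map (occ_heights Sg x) ts).
Proof. simpl. f_equal. Qed.

Lemma subst_comp s1 s2 t : sb s2 (sb s1 t) = sb (fun x => sb s2 (s1 x)) t.
Proof.
  induction t as [x|f ts IH] using term_ind_nested; simpl; auto. f_equal.
  rewrite map_map. apply map_ext_in. rewrite Forall_forall in IH. auto.
Qed.

Lemma subst_ext_occurs s1 s2 t :
  (forall x, occurs Sg x t -> s1 x = s2 x) -> sb s1 t = sb s2 t.
Proof.
  induction t as [x|f ts IH] using term_ind_nested; intro E; simpl.
  - apply E. reflexivity.
  - f_equal. apply map_ext_in. rewrite Forall_forall in IH. intros u Hu.
    apply IH; auto. intros x Hx. apply E, occurs_App, Exists_exists. eauto.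
Qed.

Lemma subst_id t : sb (@Var Sg) t = t.
Proof.
  induction t as [x|f ts IH] using term_ind_nested; simpl; auto. f_equal.
  rewrite <- map_id. apply map_ext_in. rewrite Forall_forall in IH. auto.
Qed.

Lemma subst_closed th t : closed Sg t -> sb th t = t.
Proof.
  intro C. rewrite <- (subst_id t) at 2. apply subst_ext_occurs.
  intros x Hx. destruct (C x Hx).
Qed.

Lemma subst_rename sig r t : sb sig (rename Sg r t) = sb (fun x => sig (r x)) t.
Proof. apply subst_comp. Qed.

Lemma occurs_subst y th t :
  occurs Sg y (sb th t) -> exists z, occurs Sg z t /\ occurs Sg y (th z).
Proof.
  induction t as [x|f ts IH] using term_ind_nested; intro O.
  - exists x. simpl. auto.
  - apply occurs_App, Exists_exists in O. destruct O as [w [Hw Ow]].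
    apply in_map_iff in Hw. destruct Hw as [u [<- Hu]].
    rewrite Forall_forall in IH. destruct (IH u Hu Ow) as [z [Hz Oz]].
    exists z. split; auto. apply occurs_App, Exists_exists. eauto.
Qed.

Lemma subst_eq_occurs s1 s2 t x :
  sb s1 t = sb s2 t -> occurs Sg x t -> s1 x = s2 x.
Proof.
  induction t as [y|f ts IH] using term_ind_nested; intros E O.
  - simpl in *. subst. auto.
  - injection E as E. apply occurs_App, Exists_exists in O. destruct O as [u [Hu Ou]].
    rewrite Forall_forall in IH. apply (IH u Hu); auto.
    clear -E Hu. induction ts as [|v ts IHts]; simpl in *; [destruct Hu|].
    injection E as E1 E2. destruct Hu; subst; auto.
Qed.

Lemma occurs_subst_intro y th t x :
  occurs Sg x t -> occurs Sg y (th x) -> occurs Sg y (sb th t).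
Proof.
  induction t as [z|f ts IH] using term_ind_nested; intros O Oy.
  - simpl in O. subst. exact Oy.
  - apply occurs_App, Exists_exists in O. destruct O as [u [Hu Ou]].
    rewrite Forall_forall in IH. apply occurs_App, Exists_exists.
    exists (sb th u). split; [apply in_map|]; auto.
Qed.

Lemma closed_subst_occurs th t x : occurs Sg x t -> closed Sg (sb th t) -> closed Sg (th x).
Proof. intros O C y Hy. exact (C y (occurs_subst_intro y th t x O Hy)). Qed.

Fixpoint size (t : tm) : nat :=
  match t with
  | Var _ => 1
  | App _ ts => S ((fix sl (l : list tm) : nat :=
       match l with [] => 0 | u :: l' => size u + sl l' end) ts)
  end.

Fixpoint vars (t : tm) : list nat :=
  match t with
  | Var x => [x]
  | App _ ts => (fix vl (l : list tm) : list nat :=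
       match l with [] => [] | u :: l' => vars u ++ vl l' end) ts
  end.

Lemma in_vars x t : In x (vars t) <-> occurs Sg x t.
Proof.
  induction t as [y|f ts IH] using term_ind_nested.
  - simpl. intuition.
  - rewrite occurs_App. simpl. induction ts as [|u ts IHts]; simpl.
    + split; [tauto | intro H; inversion H].
    + apply Forall_cons_iff in IH as [Hu Hts].
      rewrite in_app_iff, Exists_cons, Hu, IHts by exact Hts. reflexivity.
Qed.

Lemma size_subterm f u ts : In u ts -> size u < size (App f ts).
Proof.
  induction ts as [|v ts IH]; simpl; [tauto|].
  intros [<-|H]; [lia|]. apply IH in H. simpl in H. lia.
Qed.

Lemma size_subst_occurs sg x t : occurs Sg x t -> size (sg x) <= size (sb sg t).
Proof.
  induction t as [y|f ts IH] using term_ind_nested; intro O.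
  - simpl in O. subst. simpl. lia.
  - apply occurs_App, Exists_exists in O. destruct O as [u [Hu Ou]].
    rewrite Forall_forall in IH. specialize (IH u Hu Ou).
    pose proof (size_subterm f (sb sg u) (map (sb sg) ts) (in_map _ _ _ Hu)).
    change (sb sg (App f ts)) with (App f (map (sb sg) ts)). lia.
Qed.

Lemma occurs_check sg x f ts : occurs Sg x (App f ts) -> sg x <> sb sg (App f ts).
Proof.
  intros O E. apply occurs_App, Exists_exists in O. destruct O as [u [Hu Ou]].
  pose proof (size_subst_occurs sg x u Ou).
  pose proof (size_subterm f (sb sg u) (map (sb sg) ts) (in_map _ _ _ Hu)).
  change (sb sg (App f ts)) with (App f (map (sb sg) ts)) in E. rewrite <- E in H0. lia.
Qed.

End Terms.

Section Unification.
Variable Sg : signature.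
Local Notation tm := (term Sg).
Local Notation sb := (subst Sg).

Definition eqn : Type := (tm * tm)%type.

Definition unifies (sg : nat -> tm) (E : list eqn) : Prop :=
  Forall (fun p => sb sg (fst p) = sb sg (snd p)) E.

Definition mgu_of (th : nat -> tm) (E : list eqn) : Prop :=
  unifies th E /\ forall sg, unifies sg E -> exists rho, forall x, sg x = sb rho (th x).

Lemma mgu_of_equiv E1 E2 th :
  (forall sg, unifies sg E1 <-> unifies sg E2) -> mgu_of th E1 -> mgu_of th E2.
Proof. intros Eq [U G]. split; [apply Eq; auto|]. intros sg Hs. apply G, Eq, Hs. Qed.

Definition eqn_vars (E : list eqn) : list nat :=
  flat_map (fun p => vars Sg (fst p) ++ vars Sg (snd p)) E.

Definition eqn_size (E : list eqn) : nat :=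
  fold_right (fun p n => size Sg (fst p) + size Sg (snd p) + n) 0 E.

Definition nvars (E : list eqn) : nat := length (nodup Nat.eq_dec (eqn_vars E)).

Lemma nvars_incl E1 E2 : incl (eqn_vars E1) (eqn_vars E2) -> nvars E1 <= nvars E2.
Proof.
  intro I. apply NoDup_incl_length; [apply NoDup_nodup|].
  intros a Ha. apply nodup_In. apply nodup_In in Ha. auto.
Qed.

Lemma nvars_incl_lt E1 E2 x :
  incl (eqn_vars E1) (eqn_vars E2) -> In x (eqn_vars E2) -> ~ In x (eqn_vars E1) ->
  nvars E1 < nvars E2.
Proof.
  intros I X NX. unfold nvars.
  apply Nat.le_lt_trans with (length (remove Nat.eq_dec x (nodup Nat.eq_dec (eqn_vars E2)))).
  - apply NoDup_incl_length; [apply NoDup_nodup|].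
    intros a Ha. apply nodup_In in Ha. apply in_in_remove.
    + intros ->. auto.
    + apply nodup_In. auto.
  - apply remove_length_lt. apply nodup_In. auto.
Qed.

Lemma in_eqn_vars_cons z a b E :
  In z (eqn_vars ((a, b) :: E)) <-> occurs Sg z a \/ occurs Sg z b \/ In z (eqn_vars E).
Proof. unfold eqn_vars. simpl. rewrite !in_app_iff, !in_vars. tauto. Qed.

(* Termination measure of Robinson's unification algorithm. *)
Definition eqns_lt (E1 E2 : list eqn) : Prop :=
  nvars E1 < nvars E2 \/ nvars E1 = nvars E2 /\ eqn_size E1 < eqn_size E2.

Lemma eqns_lt_wf : well_founded eqns_lt.
Proof.
  assert (H : forall n m E, nvars E = n -> eqn_size E = m -> Acc eqns_lt E).
  { induction n as [n IHn] using lt_wf_ind. induction m as [m IHm] using lt_wf_ind.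
    intros E <- <-. constructor. intros E' [Lt|[Eq Lt]].
    - eapply IHn; eauto.
    - eapply IHm; eauto. }
  intro E. eapply H; eauto.
Qed.

Lemma eqns_lt_size E1 E2 :
  nvars E1 <= nvars E2 -> eqn_size E1 < eqn_size E2 -> eqns_lt E1 E2.
Proof. unfold eqns_lt. lia. Qed.

Definition bind (x : nat) (t : tm) : nat -> tm :=
  fun y => if Nat.eqb y x then t else Var y.

Definition subst_eqns (th : nat -> tm) (E : list eqn) : list eqn :=
  map (fun p => (sb th (fst p), sb th (snd p))) E.

Lemma subst_bind_fresh x t s : ~ occurs Sg x s -> sb (bind x t) s = s.
Proof.
  intro N. rewrite <- (subst_id Sg s) at 2. apply subst_ext_occurs.
  intros y Hy. unfold bind. destruct (Nat.eqb_spec y x); subst; tauto.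
Qed.

Lemma eqn_vars_elim x t E y : ~ occurs Sg x t ->
  In y (eqn_vars (subst_eqns (bind x t) E)) -> y <> x /\ In y (eqn_vars ((Var x, t) :: E)).
Proof.
  intro N. assert (Sx : forall s, occurs Sg y (sb (bind x t) s) ->
                          y <> x /\ (occurs Sg y t \/ occurs Sg y s)).
  { intros s O. apply occurs_subst in O. destruct O as [z [Hz Oy]]. unfold bind in Oy.
    destruct (Nat.eqb_spec z x).
    - split; [intros ->|]; auto.
    - simpl in Oy. subst. auto. }
  rewrite in_eqn_vars_cons. induction E as [|[a b] E IH]; simpl; [tauto|].
  rewrite !in_app_iff, !in_vars. intros [[A|A]|A].
  - destruct (Sx a A) as [? [?|?]]; split; auto; rewrite in_eqn_vars_cons; tauto.
  - destruct (Sx b A) as [? [?|?]]; split; auto; rewrite in_eqn_vars_cons; tauto.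
  - destruct (IH A) as [? [?|[?|?]]]; split; auto; rewrite in_eqn_vars_cons; tauto.
Qed.

Lemma nvars_elim_lt x t E : ~ occurs Sg x t ->
  nvars (subst_eqns (bind x t) E) < nvars ((Var x, t) :: E).
Proof.
  intro N. apply (nvars_incl_lt _ _ x).
  - intros y Hy. apply (eqn_vars_elim x t E y N Hy).
  - apply in_eqn_vars_cons. left. reflexivity.
  - intro Hx. apply (eqn_vars_elim x t E x N Hx). reflexivity.
Qed.

Lemma unifies_elim x t E sg : sg x = sb sg t -> unifies sg E -> unifies sg (subst_eqns (bind x t) E).
Proof.
  intros Hx U. unfold unifies, subst_eqns in *. rewrite Forall_map.
  eapply Forall_impl; [|exact U]. intros [a b] H. simpl in *.
  assert (Hs : forall s, sb sg (sb (bind x t) s) = sb sg s).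
  { intro s. rewrite subst_comp. apply subst_ext_occurs. intros z _. unfold bind.
    destruct (Nat.eqb_spec z x); subst; auto. }
  rewrite !Hs. exact H.
Qed.

Lemma mgu_of_elim x t E th : ~ occurs Sg x t -> mgu_of th (subst_eqns (bind x t) E) ->
  mgu_of (fun y => sb th (bind x t y)) ((Var x, t) :: E).
Proof.
  intros N [U G]. split.
  - constructor.
    + simpl. unfold bind at 1. rewrite Nat.eqb_refl, <- (subst_comp Sg (bind x t) th).
      rewrite subst_bind_fresh; auto.
    + unfold unifies, subst_eqns in U. rewrite Forall_map in U. eapply Forall_impl; [|exact U].
      intros [a b] H. simpl in *. rewrite <- !(subst_comp Sg (bind x t) th). exact H.
  - intros sg Hs. inversion Hs as [|? ? Hx HE]. simpl in Hx.
    destruct (G sg (unifies_elim x t E sg Hx HE)) as [rho Hr].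
    exists rho. intro y. unfold bind. destruct (Nat.eqb_spec y x) as [->|].
    + rewrite Hx, subst_comp. apply subst_ext_occurs. auto.
    + apply Hr.
Qed.

Lemma unifies_swap sg a b E : unifies sg ((a, b) :: E) <-> unifies sg ((b, a) :: E).
Proof. unfold unifies. rewrite !Forall_cons_iff. simpl. intuition. Qed.

Lemma eqns_lt_swap E a b E0 : eqns_lt E ((b, a) :: E0) -> eqns_lt E ((a, b) :: E0).
Proof.
  assert (Nv : nvars ((b, a) :: E0) = nvars ((a, b) :: E0)).
  { apply Nat.le_antisymm; apply nvars_incl; intros z;
      rewrite !in_eqn_vars_cons; tauto. }
  unfold eqns_lt. rewrite Nv. simpl. lia.
Qed.

Lemma unifies_decompose sg f ts ts' E : length ts = length ts' ->
  (unifies sg ((App f ts, App f ts') :: E) <-> unifies sg (combine ts ts' ++ E)).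
Proof.
  unfold unifies. rewrite Forall_cons_iff, Forall_app. simpl. intro L.
  enough (map (sb sg) ts = map (sb sg) ts' <->
          Forall (fun p => sb sg (fst p) = sb sg (snd p)) (combine ts ts'))
    by (split; intros [A B]; split; auto; [apply H | f_equal; apply H]; congruence).
  revert ts' L. induction ts as [|a ts IH]; intros [|b ts'] L; simpl in *; try discriminate.
  - split; auto.
  - rewrite Forall_cons_iff, <- IH by auto. simpl. split.
    + intro E'. injection E'. auto.
    + intros [-> ->]. reflexivity.
Qed.

Lemma eqns_lt_decompose f ts ts' E :
  eqns_lt (combine ts ts' ++ E) ((App f ts, App f ts') :: E).
Proof.
  assert (Hv : incl (eqn_vars (combine ts ts')) (vars Sg (App f ts) ++ vars Sg (App f ts')) /\
               eqn_size (combine ts ts') < size Sg (App f ts) + size Sg (App f ts')).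
  { revert ts'. induction ts as [|a ts IH]; intros [|b ts']; simpl;
      try (split; [intros z []| lia]).
    destruct (IH ts') as [I Sz]. split.
    - intros z. simpl. rewrite !in_app_iff. intros [[A|A]|A]; auto.
      apply I in A. rewrite in_app_iff in A. simpl in A. tauto.
    - simpl in Sz. lia. }
  destruct Hv as [I Sz].
  assert (Le : nvars (combine ts ts' ++ E) <= nvars ((App f ts, App f ts') :: E)).
  { apply nvars_incl. unfold eqn_vars at 1. rewrite flat_map_app. intros z Hz.
    apply in_app_iff in Hz. rewrite in_eqn_vars_cons, <- !in_vars.
    destruct Hz as [Hz|Hz]; [apply I, in_app_iff in Hz|]; tauto. }
  assert (Sz' : eqn_size (combine ts ts' ++ E) = eqn_size (combine ts ts') + eqn_size E).
  { clear. induction (combine ts ts'); simpl; lia. }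
  apply eqns_lt_size; auto. change (eqn_size ((App f ts, App f ts') :: E))
    with (size Sg (App f ts) + size Sg (App f ts') + eqn_size E).
  lia.
Qed.

Lemma mgu_of_drop t E th : mgu_of th E -> mgu_of th ((t, t) :: E).
Proof.
  apply mgu_of_equiv. intro sg. unfold unifies. rewrite Forall_cons_iff. simpl. tauto.
Qed.

Theorem unifiable_mgu_of E sg : unifies sg E -> exists th, mgu_of th E.
Proof.
  revert sg. induction E as [E IH] using (well_founded_ind eqns_lt_wf). intros sg U.
  destruct E as [|[a b] E0].
  - exists (@Var Sg). split; [constructor|]. intros sg' _. exists sg'. reflexivity.
  - apply Forall_cons_iff in U as [Hab U0]. simpl in Hab.
    assert (Elim : forall x t, ~ occurs Sg x t -> sg x = sb sg t ->
              (forall E', eqns_lt E' ((Var x, t) :: E0) -> eqns_lt E' ((a, b) :: E0)) ->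
              exists th, mgu_of th ((Var x, t) :: E0)).
    { intros x t N Hx Lt. destruct (IH (subst_eqns (bind x t) E0)) with sg as [th Hth].
      - apply Lt. left. apply nvars_elim_lt, N.
      - apply unifies_elim; auto.
      - eexists. apply mgu_of_elim; eauto. }
    destruct a as [x|f ts].
    + destruct (classic (occurs Sg x b)) as [O|N]; [destruct b as [y|g ts']|].
      * simpl in O. subst y. destruct (IH E0) with sg as [th Hth]; auto.
        -- apply eqns_lt_size; [|simpl; lia].
           apply nvars_incl. intros z. rewrite in_eqn_vars_cons. tauto.
        -- exists th. apply mgu_of_drop, Hth.
      * destruct (occurs_check Sg sg x g ts' O Hab).
      * apply Elim; auto.
    + destruct b as [y|g ts'].
      * destruct (classic (occurs Sg y (App f ts))) as [O|N].
        -- destruct (occurs_check Sg sg y f ts O (eq_sym Hab)).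
        -- destruct (Elim y (App f ts)) as [th Hth];
             [exact N | symmetry; exact Hab | intro; apply eqns_lt_swap |].
           exists th. eapply mgu_of_equiv; [|exact Hth]. intro. apply unifies_swap.
      * simpl in Hab. injection Hab as <- Hmap.
        assert (L : length ts = length ts').
        { rewrite <- (length_map (sb sg) ts), <- (length_map (sb sg) ts'), Hmap. reflexivity. }
        destruct (IH (combine ts ts' ++ E0)) with sg as [th Hth].
        -- apply eqns_lt_decompose.
        -- apply (unifies_decompose sg f ts ts' E0 L). constructor; auto.
           simpl. f_equal. exact Hmap.
        -- exists th. eapply mgu_of_equiv; [|exact Hth].
           intro. symmetry. apply unifies_decompose, L.
Qed.

Corollary unifiable_is_mgu a b sg : sb sg a = sb sg b -> exists th, is_mgu Sg th a b.
Proof.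
  intro E. destruct (unifiable_mgu_of [(a, b)] sg) as [th [U G]]; [repeat constructor; auto|].
  exists th. inversion U. split; auto. intros sg' E'. apply G. repeat constructor. exact E'.
Qed.

End Unification.

Section Products.
Variable Sg : signature.
Local Notation tm := (term Sg).
Local Notation sb := (subst Sg).

Lemma flow_equiv_refl g : flow_equiv Sg g g.
Proof. exists (fun x => x). split; auto. unfold rename. rewrite !subst_id. auto. Qed.

Lemma flow_equiv_instance f g : flow_equiv Sg f g ->
  forall sig, exists tau, sb tau (fst f) = sb sig (fst g) /\ sb tau (snd f) = sb sig (snd g).
Proof.
  intros [r [_ [<- <-]]] sig. exists (fun x => sig (r x)). rewrite !subst_rename. auto.
Qed.

Lemma prod_instance f h g : prod Sg f h g ->
  forall sig, exists tau sig',
    sb tau (fst f) = sb sig (fst g) /\ sb tau (snd f) = sb sig' (fst h) /\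
    sb sig' (snd h) = sb sig (snd g).
Proof.
  intros [s [th [_ [_ [[M _] Eq]]]]] sig.
  destruct (flow_equiv_instance _ _ Eq sig) as [tau0 [E1 E2]]. simpl in E1, E2.
  exists (fun x => sb tau0 (th x)), (fun x => sb tau0 (th (s x))).
  repeat split.
  - rewrite <- E1, subst_comp. reflexivity.
  - rewrite <- (subst_comp Sg th tau0), M, subst_comp, subst_rename. reflexivity.
  - rewrite <- E2, subst_comp, subst_rename. reflexivity.
Qed.

Definition max_var (t : tm) : nat := fold_right Nat.max 0 (vars Sg t).

Lemma max_var_occurs x t : occurs Sg x t -> x <= max_var t.
Proof.
  intro O. apply in_vars in O. unfold max_var. induction (vars Sg t); simpl in *; [tauto|].
  destruct O as [->|O]; [lia|]. specialize (IHl O). lia.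
Qed.

Lemma prod_of_matching_instances (f h : flow Sg) tau sig :
  sb tau (snd f) = sb sig (fst h) ->
  exists g rho, prod Sg f h g /\ sb rho (fst g) = sb tau (fst f).
Proof.
  intro E.
  (* Shift the variables of [h] above those of [f]; [kap] glues [tau] and [sig] into one
     unifier of the renamed-apart interface. *)
  set (N := S (Nat.max (max_var (fst f)) (max_var (snd f)))).
  set (s := fun y => y + N).
  set (kap := fun y => if N <=? y then sig (y - N) else tau y).
  assert (Kf : forall t, (forall x, occurs Sg x t -> x < N) -> sb kap t = sb tau t).
  { intros t Ht. apply subst_ext_occurs. intros x Hx. unfold kap. specialize (Ht x Hx).
    destruct (Nat.leb_spec N x); [lia|auto]. }
  assert (Kh : forall t, sb kap (rename Sg s t) = sb sig t).
  { intro t. rewrite subst_rename. apply subst_ext_occurs. intros x _.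
    unfold kap, s. destruct (Nat.leb_spec N (x + N)); [|lia]. f_equal. lia. }
  assert (Of : forall x, flow_occurs Sg x f -> x < N).
  { intros x [Hx|Hx]; apply max_var_occurs in Hx; unfold N; lia. }
  assert (K : sb kap (snd f) = sb kap (rename Sg s (fst h))).
  { rewrite Kh, Kf; auto. intros x Hx. apply Of. right. exact Hx. }
  destruct (unifiable_is_mgu Sg _ _ kap K) as [th Hth].
  exists (sb th (fst f), sb th (rename Sg s (snd h))).
  destruct (proj2 Hth kap K) as [rho Hr].
  exists rho. split.
  - exists s, th. split; [|split; [|split; [exact Hth | apply flow_equiv_refl]]].
    + intros x y Hxy. unfold s in Hxy. lia.
    + intros x Hx y _. apply Of in Hx. unfold s. lia.
  - simpl. rewrite subst_comp, <- (Kf (fst f)).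
    + apply subst_ext_occurs. auto.
    + intros x Hx. apply Of. left. exact Hx.
Qed.

(* The mgu is the matching substitution restricted to the variables of [snd f]. *)
Lemma prod_fact f sg :
  (forall x, occurs Sg x (fst f) -> occurs Sg x (snd f)) -> closed Sg (sb sg (snd f)) ->
  prod Sg f (Defs.fact Sg (sb sg (snd f))) (Defs.fact Sg (sb sg (fst f))).
Proof.
  intros Hv C.
  set (th := fun x => if excluded_middle_informative (occurs Sg x (snd f)) then sg x else Var x).
  assert (Th : forall t, (forall x, occurs Sg x t -> occurs Sg x (snd f)) -> sb th t = sb sg t).
  { intros t Ht. apply subst_ext_occurs. intros x Hx. unfold th.
    destruct excluded_middle_informative; [reflexivity | exfalso; auto]. }
  exists (fun x => x), th. split; [auto|]. split; [|split].
  - intros x _ y [Hy|Hy]; simpl in Hy; [destruct (C y Hy) | destruct Hy].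
  - simpl. unfold rename. rewrite subst_id. split.
    + rewrite (subst_closed Sg th _ C). apply Th. auto.
    + intros sg' E. exists sg'. intro x. unfold th.
      destruct excluded_middle_informative as [O|O]; [|reflexivity].
      rewrite (subst_closed Sg sg' _ C) in E.
      rewrite (subst_closed Sg sg' (sg x)) by (apply (closed_subst_occurs Sg sg (snd f)); auto).
      apply (subst_eq_occurs Sg sg' sg (snd f)); auto.
  - exists (fun x => x). simpl. unfold rename. rewrite !subst_id, Th by auto. auto.
Qed.

Variable F : wiring Sg.

(* [b <- a] is an instance of a flow of [F]; unlike an edge of G(F), neither term need be
   closed or lie in Comp(F). *)
Definition inst_step (a b : tm) : Prop :=
  exists f tau, In f F /\ sb tau (snd f) = a /\ sb tau (fst f) = b.

Lemma comp_edge_inst_step t c : comp_edge Sg F t c -> inst_step t c.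
Proof.
  intros [[_ [Ct _]] [[_ [Cc _]] [f [Hf P]]]].
  destruct (prod_instance _ _ _ P (@Var Sg)) as [tau [sig' [E1 [E2 _]]]].
  simpl in E1, E2. exists f, tau. split; auto.
  rewrite E1, E2, !subst_closed by assumption. auto.
Qed.

Lemma cycle_pow t : clos_trans tm (comp_edge Sg F) t t -> forall n, exists g, pow Sg F n g.
Proof.
  intros Ct.
  assert (Next : forall c, clos_trans tm (comp_edge Sg F) c t ->
            exists c', inst_step c c' /\ clos_trans tm (comp_edge Sg F) c' t).
  { intros c H. apply clos_trans_t1n in H. inversion H as [c' E|c' t' E H'].
    - exists t. split; [apply comp_edge_inst_step; auto | exact Ct].
    - exists c'. split; [apply comp_edge_inst_step; auto | apply clos_t1n_trans; auto]. }
  assert (P : forall n, exists h sig c, pow Sg F n h /\ sb sig (fst h) = c /\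
                                        clos_trans tm (comp_edge Sg F) c t).
  { induction n as [|m [h [sig [c [Hp [Hc Hct]]]]]].
    - destruct (Next t Ct) as [c1 [[f [tau [Hf [_ Hu]]]] T1]].
      exists f, tau, c1. repeat split; auto. exists f. split; auto. apply flow_equiv_refl.
    - destruct (Next c Hct) as [c1 [[f [tau [Hf [Hv Hu]]]] T1]].
      destruct (prod_of_matching_instances f h tau sig) as [g [rho [Hpr Hr]]]; [congruence|].
      exists g, rho, c1. repeat split; [|congruence|auto]. exists f, h. auto. }
  intro n. destruct (P n) as [h [_ [_ [Hp _]]]]. eauto.
Qed.

End Products.

Fixpoint chain {A : Type} (R : A -> A -> Prop) (l : list A) : Prop :=
  match l with
  | x :: (y :: _) as l' => R x y /\ chain R l'
  | _ => True
  end.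

Section Chains.
Variables (A : Type) (R : A -> A -> Prop).

Lemma chain_app_l l1 l2 : chain R (l1 ++ l2) -> chain R l1.
Proof.
  induction l1 as [|a [|b l1] IH]; simpl; auto. intros [H1 H2]. exact (conj H1 (IH H2)).
Qed.

Lemma chain_app_r l1 l2 : chain R (l1 ++ l2) -> chain R l2.
Proof.
  induction l1 as [|a l1 IH]; simpl; auto. intro H. apply IH.
  destruct (l1 ++ l2); tauto.
Qed.

Lemma chain_snoc l x y : chain R (l ++ [x]) -> R x y -> chain R (l ++ [x; y]).
Proof.
  induction l as [|a [|b l] IH]; simpl; auto.
  - intros [H1 _] H2. auto.
  - intros [H1 H2] H3. exact (conj H1 (IH H2 H3)).
Qed.

Lemma chain_clos_trans x m y : chain R (x :: m ++ [y]) -> clos_trans A R x y.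
Proof.
  revert x. induction m as [|z m IH]; simpl; intros x H.
  - apply t_step. tauto.
  - destruct H as [H1 H2]. apply t_trans with z; [apply t_step | apply IH]; auto.
Qed.

Lemma chain_repeat_cycle l : chain R l -> ~ NoDup l -> exists x, clos_trans A R x x.
Proof.
  intros C N. destruct (not_NoDup (fun x y : A => classic (x = y)) N)
    as [x [l1 [l2 [l3 ->]]]].
  exists x. apply chain_app_r in C. apply (chain_clos_trans x l2 x).
  apply (chain_app_l _ l3). simpl. rewrite <- app_assoc. exact C.
Qed.

End Chains.

Lemma chain_map {A B : Type} (R : A -> A -> Prop) (R' : B -> B -> Prop) (phi : A -> B) l :
  (forall a b, R a b -> R' (phi a) (phi b)) -> chain R l -> chain R' (map phi l).
Proof.
  intro HR. induction l as [|a [|b l] IH]; simpl; auto.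
  intros [H1 H2]. exact (conj (HR a b H1) (IH H2)).
Qed.

Lemma pow_walk (Sg : signature) (F : wiring Sg) n g : pow Sg F n g ->
  forall sig, exists l, length l = n /\
    chain (inst_step Sg F) (subst Sg sig (snd g) :: l ++ [subst Sg sig (fst g)]).
Proof.
  revert g. induction n as [|m IH]; intros g Hp sig.
  - destruct Hp as [f [Hf Eq]]. destruct (flow_equiv_instance Sg f g Eq sig) as [tau [E1 E2]].
    exists []. simpl. split; auto. split; auto. exists f, tau. auto.
  - destruct Hp as [f [h [Hf [Hh P]]]].
    destruct (prod_instance Sg f h g P sig) as [tau [sig' [E1 [E2 E3]]]].
    destruct (IH h Hh sig') as [l [Hl C]].
    exists (l ++ [subst Sg sig' (fst h)]). split; [rewrite length_app; simpl; lia|].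
    rewrite <- E3, <- app_assoc. apply (chain_snoc _ _ (_ :: l)); [exact C|].
    exists f, tau. auto.
Qed.

Fixpoint tuples {A : Type} (n : nat) (L : list A) : list (list A) :=
  match n with
  | 0 => [[]]
  | S n => flat_map (fun x => map (cons x) (tuples n L)) L
  end.

Lemma in_tuples {A : Type} (L : list A) ts :
  Forall (fun t => In t L) ts -> In ts (tuples (length ts) L).
Proof.
  induction ts as [|a ts IH]; simpl; auto. intro H. apply Forall_cons_iff in H as [Ha Hts].
  apply in_flat_map. exists a. split; auto. apply in_map, IH, Hts.
Qed.

Section Truncation.
Variable Sg : signature.
Local Notation tm := (term Sg).
Local Notation sb := (subst Sg).
Variable F : wiring Sg.

Definition comp_symbol (g : sym Sg) : Prop :=
  g = star Sg \/ exists f, In f F /\ (sym_occurs Sg g (fst f) \/ sym_occurs Sg g (snd f)).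

(* [in_comp F t] is [bounded (wiring_height F) t]. *)
Definition bounded (d : nat) (t : tm) : Prop :=
  wf Sg t /\ closed Sg t /\ height Sg t <= d /\ forall g, sym_occurs Sg g t -> comp_symbol g.

Definition trunc_node (d : nat) (g : sym Sg) (ts : list tm) : Prop :=
  comp_symbol g /\ length ts = arity Sg g /\ (d = 0 -> ts = []).

Fixpoint trunc (d : nat) (t : tm) : tm :=
  match t with
  | Var _ => starT Sg
  | App g ts =>
      if excluded_middle_informative (trunc_node d g ts)
      then App g (map (trunc (pred d)) ts) else starT Sg
  end.

Lemma bounded_App d g ts :
  bounded d (App g ts) <-> trunc_node d g ts /\ Forall (bounded (pred d)) ts.
Proof.
  unfold bounded, trunc_node, closed.
  rewrite wf_App, height_App_le. setoid_rewrite occurs_App. setoid_rewrite sym_occurs_App.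
  setoid_rewrite Exists_exists. rewrite !Forall_forall. split.
  - intros [[L W] [C [Hh S]]]. split; [split; [|split]|]; auto.
    + intros ->. destruct ts as [|u ts]; auto. specialize (Hh u (or_introl eq_refl)). lia.
    + intros u Hu. repeat split; eauto.
      * intros x Ox. apply (C x). eauto.
      * specialize (Hh u Hu). lia.
  - intros [[G [L Z]] B]. repeat split; auto.
    + intros u Hu. apply B, Hu.
    + intros x [u [Hu Ox]]. destruct (B u Hu) as [_ [Cu _]]. exact (Cu x Ox).
    + intros u Hu. destruct d as [|d]; [rewrite Z in Hu; auto; destruct Hu|].
      destruct (B u Hu) as [_ [_ [Hh _]]]. simpl in Hh. lia.
    + intros g' [->|[u [Hu Hg]]]; auto. destruct (B u Hu) as [_ [_ [_ Su]]]. exact (Su g' Hg).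
Qed.

Lemma bounded_star d : bounded d (starT Sg).
Proof.
  apply bounded_App. split; [|constructor]. repeat split; [left; auto|].
  rewrite arity_star. reflexivity.
Qed.

Lemma bounded_trunc d t : bounded d (trunc d t).
Proof.
  revert d. induction t as [x|g ts IH] using term_ind_nested; intro d; simpl.
  - apply bounded_star.
  - destruct excluded_middle_informative as [[G [L Z]]|]; [|apply bounded_star].
    apply bounded_App. split.
    + unfold trunc_node. rewrite length_map. repeat split; auto. intro D. rewrite Z; auto.
    + apply Forall_map. eapply Forall_impl; [|exact IH]. auto.
Qed.

(* Truncation commutes with instantiation when every variable of [t] sits at a fixed depth:
   [K x] is the depth of [x], and [t] itself is seen at depth [c] of a term of height [D]. *)
Lemma trunc_subst D sig (K : nat -> nat) t : forall d c,
  c + d = D -> (forall x k, In k (occ_heights Sg x t) -> K x = c + k) ->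
  wf Sg t -> height Sg t <= d -> (forall g, sym_occurs Sg g t -> comp_symbol g) ->
  trunc d (sb sig t) = sb (fun x => trunc (D - K x) (sig x)) t.
Proof.
  induction t as [x|g ts IH] using term_ind_nested; intros d c Hd HK Hw Hh Hs.
  - simpl. rewrite (HK x 0) by (simpl; rewrite Nat.eqb_refl; left; reflexivity). f_equal. lia.
  - apply wf_App in Hw as [L Fw]. apply height_App_le in Hh. rewrite Forall_forall in Fw, Hh, IH.
    simpl. destruct excluded_middle_informative as [_|N].
    + f_equal. rewrite map_map. apply map_ext_in. intros u Hu. specialize (Hh u Hu).
      apply (IH u Hu (pred d) (S c)); auto; try lia.
      * intros x k Hk. rewrite (HK x (S k)); [lia|]. rewrite occ_heights_App.
        apply in_map, in_flat_map. eauto.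
      * intros g' Hg'. apply Hs, sym_occurs_App. right. apply Exists_exists. eauto.
    + exfalso. apply N. unfold trunc_node. rewrite length_map. repeat split; auto.
      * apply Hs, sym_occurs_App. auto.
      * intros ->. destruct ts as [|u ts]; auto. specialize (Hh u (or_introl eq_refl)). lia.
Qed.

Fixpoint syms (t : tm) : list (sym Sg) :=
  match t with
  | Var _ => []
  | App g ts => g :: (fix sl (l : list tm) : list (sym Sg) :=
       match l with [] => [] | u :: l' => syms u ++ sl l' end) ts
  end.

Lemma in_syms g t : sym_occurs Sg g t -> In g (syms t).
Proof.
  induction t as [x|f ts IH] using term_ind_nested; [simpl; tauto|].
  intro H. apply sym_occurs_App in H as [->|H]; simpl; [auto|]. right.
  induction ts as [|u ts IHts]; [inversion H|]. apply Forall_cons_iff in IH as [Hu Hts].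
  apply in_app_iff. apply Exists_cons in H as [H|H]; auto.
Qed.

Lemma bounded_finite d : exists L, forall t, bounded d t -> In t L.
Proof.
  set (SL := star Sg :: flat_map (fun f => syms (fst f) ++ syms (snd f)) F).
  assert (HSL : forall g, comp_symbol g -> In g SL).
  { intros g [->|[f [Hf Ho]]]; simpl; auto. right. apply in_flat_map. exists f.
    split; auto. apply in_app_iff. destruct Ho; [left|right]; apply in_syms; auto. }
  assert (NotVar : forall d x, ~ bounded d (Var x)).
  { intros d' x [_ [C _]]. apply (C x). reflexivity. }
  induction d as [|d [L HL]].
  - exists (map (fun g => App g []) SL). intros [x|g ts] B; [destruct (NotVar _ _ B)|].
    apply bounded_App in B as [[G [_ Z]] _]. rewrite Z by auto.
    apply (in_map (fun g => App g [])), HSL, G.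
  - exists (flat_map (fun g => map (App g) (tuples (arity Sg g) L)) SL).
    intros [x|g ts] B; [destruct (NotVar _ _ B)|].
    apply bounded_App in B as [[G [Len _]] B]. apply in_flat_map. exists g.
    split; [apply HSL, G|]. apply in_map. rewrite <- Len. apply in_tuples.
    eapply Forall_impl; [|exact B]. auto.
Qed.

Lemma flow_height_le f : In f F -> flow_height Sg f <= wiring_height Sg F.
Proof.
  induction F as [|a l IHl]; simpl; [tauto|]. intros [->|H]; [lia|]. apply IHl in H. lia.
Qed.

Lemma inst_step_comp_edge a b : is_wiring Sg F -> balanced Sg F -> inst_step Sg F a b ->
  comp_edge Sg F (trunc (wiring_height Sg F) a) (trunc (wiring_height Sg F) b).
Proof.
  intros W B [f [tau [Hf [<- <-]]]].
  set (H := wiring_height Sg F).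
  (* Balance: every variable of [f] occurs at the single depth [K x]. *)
  set (K := fun x => hd 0 (occ_heights Sg x (fst f) ++ occ_heights Sg x (snd f))).
  destruct (W f Hf) as [Wu [Wv Ouv]].
  pose proof (flow_height_le f Hf) as FH. unfold flow_height in FH.
  assert (Side : forall t, t = fst f \/ t = snd f ->
            (forall x k, In k (occ_heights Sg x t) -> K x = 0 + k) /\
            height Sg t <= H /\ forall g, sym_occurs Sg g t -> comp_symbol g).
  { intros t Ht. split; [|split].
    - intros x k Hk.
      assert (Hk' : In k (occ_heights Sg x (fst f) ++ occ_heights Sg x (snd f)))
        by (apply in_app_iff; destruct Ht; subst; auto).
      apply (B f Hf x); [|exact Hk'].
      unfold K. destruct (_ ++ _); [destruct Hk' | left; reflexivity].
    - destruct Ht; subst; lia.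
    - intros g Hg. right. exists f. destruct Ht; subst; auto. }
  destruct (Side (snd f) (or_intror eq_refl)) as [Kv [Hv Sv]].
  destruct (Side (fst f) (or_introl eq_refl)) as [Ku [Hu Su]].
  pose proof (bounded_trunc H (sb tau (snd f))) as Ca.
  pose proof (bounded_trunc H (sb tau (fst f))) as Cb.
  rewrite (trunc_subst H tau K (snd f) H 0) in Ca |- * by auto.
  rewrite (trunc_subst H tau K (fst f) H 0) in Cb |- * by auto.
  split; [exact Ca | split; [exact Cb|]].
  exists f. split; auto. apply prod_fact; auto. apply Ca.
Qed.

Lemma acyclic_nilpotent : is_wiring Sg F -> balanced Sg F -> acyclic Sg F -> nilpotent Sg F.
Proof.
  intros W B A. set (H := wiring_height Sg F). destruct (bounded_finite H) as [L HL].
  destruct (classic (exists g, pow Sg F (length L) g)) as [[g Hg]|N];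
    [exfalso | exists (length L); intros g Hg; apply N; eauto].
  destruct (pow_walk Sg F _ g Hg (@Var Sg)) as [l [Hl C]].
  set (walk := map (trunc H) (sb (@Var Sg) (snd g) :: l ++ [sb (@Var Sg) (fst g)])).
  assert (Cw : chain (comp_edge Sg F) walk).
  { apply (chain_map (inst_step Sg F)); auto. intros a b. apply inst_step_comp_edge; auto. }
  assert (Rep : ~ NoDup walk).
  { intro D. apply NoDup_incl_length with (l' := L) in D.
    - unfold walk in D. rewrite length_map in D. simpl in D. rewrite length_app in D.
      simpl in D. lia.
    - intros x Hx. unfold walk in Hx. apply in_map_iff in Hx. destruct Hx as [y [<- _]].
      apply HL, bounded_trunc. }
  apply A. exact (chain_repeat_cycle _ _ walk Cw Rep).
Qed.

End Truncation.

Theorem mainTheorem7 (S : signature) (F : wiring S) :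
  is_wiring S F -> balanced S F -> (nilpotent S F <-> acyclic S F).
Proof.
  intros W B. split.
  - intros [n Hn] [t Ct]. destruct (cycle_pow S F t Ct n) as [g Hg]. exact (Hn g Hg).
  - apply acyclic_nilpotent; auto.
Qed.
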